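(* Let $S$ be a Riemann surface with a hermitian metric $ds^2$ (Kähler form $\omega$). If there is a potential function $\varphi$ of $\omega$ with $|\partial\varphi|_{ds^2}^2\equiv\mathsf{C}$ for a constant $\mathsf{C}>0$, then the Gaussian curvature of $ds^2$ is constant on the domain of $\varphi$, equal to $\kappa\equiv-2/\mathsf{C}$.
   Context: Conventions: $dd^c=\sqrt{-1}\partial\bar\partial$; locally $\omega=\sqrt{-1}g\,dz\wedge d\bar z$, a potential satisfies $\partial^2\varphi/\partial z\partial\bar z=g$, and $|\partial\varphi|^2=g^{-1}|\partial\varphi/\partial z|^2$. The Gaussian curvature is normalized so that the Poincaré metric $\sqrt{-1}\frac{2}{\mathsf{K}(1-|\zeta|^2)^2}d\zeta\wedge d\bar\zeta$ on the unit disc has curvature $-\mathsf{K}$. *)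

From Stdlib Require Import Reals List.
From Coquelicot Require Import Coquelicot.
Open Scope R_scope.

(* Everything is expressed in a local holomorphic coordinate z = x + i y on an
   open set U of the plane (a coordinate chart of the Riemann surface S
   inside the domain of the potential). *)

Definition pdx (f : R -> R -> R) (x y : R) : R := Derive (fun t => f t y) x.
Definition pdy (f : R -> R -> R) (x y : R) : R := Derive (fun t => f x t) y.

Definition pd (b : bool) (f : R -> R -> R) : R -> R -> R :=
  if b then pdx f else pdy f.

Fixpoint iter_pd (l : list bool) (f : R -> R -> R) : R -> R -> R :=
  match l with
  | nil => f
  | cons b l' => pd b (iter_pd l' f)
  end.

Definition smooth_on (U : R -> R -> Prop) (f : R -> R -> R) : Prop :=
  forall (l : list bool) (x y : R), U x y ->
    ex_derive (fun t => iter_pd l f t y) x /\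
    ex_derive (fun t => iter_pd l f x t) y /\
    continuous (fun p : R * R => iter_pd l f (fst p) (snd p)) (x, y).

Definition open_domain (U : R -> R -> Prop) : Prop :=
  open (fun p : R * R => U (fst p) (snd p)).

Definition laplacian (f : R -> R -> R) (x y : R) : R :=
  pdx (pdx f) x y + pdy (pdy f) x y.

Definition dzdzbar (f : R -> R -> R) (x y : R) : R := laplacian f x y / 4.

(* For real f: |df/dz|^2 = (f_x^2 + f_y^2)/4, since df/dz = (f_x - i f_y)/2. *)
Definition abs_dz_sq (f : R -> R -> R) (x y : R) : R :=
  ((pdx f x y) ^ 2 + (pdy f x y) ^ 2) / 4.

(* Metric omega = sqrt(-1) g dz /\ d\bar z.  Gaussian curvature normalized so
   that the Poincare metric sqrt(-1) 2/(K(1-|z|^2)^2) dz/\d\bar z has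
   curvature -K:  kappa = -(1/g) d^2 (log g)/dz d\bar z. *)
Definition gauss_curv (g : R -> R -> R) (x y : R) : R :=
  - dzdzbar (fun a b => ln (g a b)) x y / g x y.

From Stdlib Require Import Reals Lra List.
From Coquelicot Require Import Coquelicot.
Open Scope R_scope.

(* With p, q the first and a, b, d the second partial derivatives of phi,
   C g = (p^2 + q^2)/4 and a + d = 4 g.  Differentiating these relations
   expresses the gradient and the Laplacian of g, hence Delta (ln g), through
   p, q, a, b, d; the Cayley-Hamilton identity for the symmetric Hessian
   [[a, b], [b, d]] then gives g Delta g - |grad g|^2 = 8 g^3 / C, i.e.
   Delta (ln g) = 8 g / C, which is the curvature -2/C. *)

Lemma iter_pd_rcons (l : list bool) (b : bool) (f : R -> R -> R) :
  iter_pd (l ++ b :: nil) f = iter_pd l (pd b f).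
Proof. induction l as [|b' l IH]; simpl; congruence. Qed.

Lemma pdx_scal (k : R) (f : R -> R -> R) (x y : R) :
  pdx (fun a b => k * f a b) x y = k * pdx f x y.
Proof. apply Derive_scal. Qed.

Lemma pdy_scal (k : R) (f : R -> R -> R) (x y : R) :
  pdy (fun a b => k * f a b) x y = k * pdy f x y.
Proof. apply Derive_scal. Qed.

Lemma laplacian_scal (k : R) (f : R -> R -> R) (x y : R) :
  laplacian (fun a b => k * f a b) x y = k * laplacian f x y.
Proof.
  unfold laplacian, pdx at 1, pdy at 1.
  rewrite (Derive_ext (fun t => pdx (fun a b => k * f a b) t y) (fun t => k * pdx f t y))
    by (intro; apply pdx_scal).
  rewrite (Derive_ext (fun t => pdy (fun a b => k * f a b) x t) (fun t => k * pdy f x t))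
    by (intro; apply pdy_scal).
  rewrite !Derive_scal. unfold pdx, pdy. ring.
Qed.

Lemma Derive_ln_pos (f : R -> R) (x : R) :
  ex_derive f x -> 0 < f x -> Derive (fun t => ln (f t)) x = Derive f x / f x.
Proof.
  intros Hf Hpos.
  rewrite Derive_comp; [| eexists; apply is_derive_ln; exact Hpos | exact Hf].
  rewrite (is_derive_unique _ _ _ (is_derive_ln _ Hpos)). field. lra.
Qed.

(* [auto_derive] leaves eta-expanded [Derive (fun t => f t) x], which [field]
   would treat as an atom distinct from [Derive f x]. *)
Ltac eta_reduce_Derive :=
  repeat match goal with |- context [Derive (fun t => ?f t) ?x] =>
    change (Derive (fun t => f t) x) with (Derive f x) end.

Lemma Derive_sum_sq_div4 (f h : R -> R) (x : R) :
  ex_derive f x -> ex_derive h x ->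
  Derive (fun t => (f t ^ 2 + h t ^ 2) / 4) x = (f x * Derive f x + h x * Derive h x) / 2.
Proof.
  intros Hf Hh. apply is_derive_unique. auto_derive; [tauto|]. eta_reduce_Derive. field.
Qed.

Lemma Derive_dot_div2 (f1 f2 h1 h2 : R -> R) (x : R) :
  ex_derive f1 x -> ex_derive f2 x -> ex_derive h1 x -> ex_derive h2 x ->
  Derive (fun t => (f1 t * f2 t + h1 t * h2 t) / 2) x
  = (Derive f1 x * f2 x + f1 x * Derive f2 x + Derive h1 x * h2 x + h1 x * Derive h2 x) / 2.
Proof.
  intros H1 H2 H3 H4. apply is_derive_unique. auto_derive; [tauto|]. eta_reduce_Derive. field.
Qed.

Section SmoothCalculus.

Variable U : R -> R -> Prop.

Lemma smooth_on_pd (b : bool) (f : R -> R -> R) : smooth_on U f -> smooth_on U (pd b f).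
Proof. intros Hf l x y Hxy. rewrite <- iter_pd_rcons. exact (Hf _ x y Hxy). Qed.

Lemma smooth_on_pdx (f : R -> R -> R) : smooth_on U f -> smooth_on U (pdx f).
Proof. exact (smooth_on_pd true f). Qed.

Lemma smooth_on_pdy (f : R -> R -> R) : smooth_on U f -> smooth_on U (pdy f).
Proof. exact (smooth_on_pd false f). Qed.

Lemma smooth_on_ex_derive_x (f : R -> R -> R) (x y : R) :
  smooth_on U f -> U x y -> ex_derive (fun t => f t y) x.
Proof. intros Hf Hxy. exact (proj1 (Hf nil x y Hxy)). Qed.

Lemma smooth_on_ex_derive_y (f : R -> R -> R) (x y : R) :
  smooth_on U f -> U x y -> ex_derive (fun t => f x t) y.
Proof. intros Hf Hxy. exact (proj1 (proj2 (Hf nil x y Hxy))). Qed.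

Lemma smooth_on_continuity_2d_pt (f : R -> R -> R) (x y : R) :
  smooth_on U f -> U x y -> continuity_2d_pt f x y.
Proof.
  intros Hf Hxy. apply continuity_2d_pt_filterlim. exact (proj2 (proj2 (Hf nil x y Hxy))).
Qed.

Lemma pdx_abs_dz_sq (f : R -> R -> R) (x y : R) : smooth_on U f -> U x y ->
  pdx (abs_dz_sq f) x y = (pdx f x y * pdx (pdx f) x y + pdy f x y * pdx (pdy f) x y) / 2.
Proof.
  intros Hf Hxy. apply Derive_sum_sq_div4.
  - exact (smooth_on_ex_derive_x _ x y (smooth_on_pdx f Hf) Hxy).
  - exact (smooth_on_ex_derive_x _ x y (smooth_on_pdy f Hf) Hxy).
Qed.

Lemma pdy_abs_dz_sq (f : R -> R -> R) (x y : R) : smooth_on U f -> U x y ->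
  pdy (abs_dz_sq f) x y = (pdx f x y * pdy (pdx f) x y + pdy f x y * pdy (pdy f) x y) / 2.
Proof.
  intros Hf Hxy. apply Derive_sum_sq_div4.
  - exact (smooth_on_ex_derive_y _ x y (smooth_on_pdx f Hf) Hxy).
  - exact (smooth_on_ex_derive_y _ x y (smooth_on_pdy f Hf) Hxy).
Qed.

Lemma pdx_laplacian (f : R -> R -> R) (x y : R) : smooth_on U f -> U x y ->
  pdx (laplacian f) x y = pdx (pdx (pdx f)) x y + pdx (pdy (pdy f)) x y.
Proof.
  intros Hf Hxy. apply Derive_plus.
  - exact (smooth_on_ex_derive_x _ x y (smooth_on_pdx _ (smooth_on_pdx f Hf)) Hxy).
  - exact (smooth_on_ex_derive_x _ x y (smooth_on_pdy _ (smooth_on_pdy f Hf)) Hxy).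
Qed.

Lemma pdy_laplacian (f : R -> R -> R) (x y : R) : smooth_on U f -> U x y ->
  pdy (laplacian f) x y = pdy (pdx (pdx f)) x y + pdy (pdy (pdy f)) x y.
Proof.
  intros Hf Hxy. apply Derive_plus.
  - exact (smooth_on_ex_derive_y _ x y (smooth_on_pdx _ (smooth_on_pdx f Hf)) Hxy).
  - exact (smooth_on_ex_derive_y _ x y (smooth_on_pdy _ (smooth_on_pdy f Hf)) Hxy).
Qed.

Hypothesis U_open : open_domain U.

Lemma open_domain_locally_2d (x y : R) : U x y -> locally_2d U x y.
Proof. intros Hxy. apply locally_2d_locally. exact (U_open (x, y) Hxy). Qed.

Lemma pdx_ext_on (F G : R -> R -> R) (x y : R) :
  (forall u v, U u v -> F u v = G u v) -> U x y -> pdx F x y = pdx G x y.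
Proof.
  intros HFG Hxy. apply Derive_ext_loc.
  destruct (open_domain_locally_2d x y Hxy) as [d Hd]. exists d. intros t Ht.
  apply HFG, Hd; [exact Ht|]. rewrite Rminus_eq_0, Rabs_R0. apply cond_pos.
Qed.

Lemma pdy_ext_on (F G : R -> R -> R) (x y : R) :
  (forall u v, U u v -> F u v = G u v) -> U x y -> pdy F x y = pdy G x y.
Proof.
  intros HFG Hxy. apply Derive_ext_loc.
  destruct (open_domain_locally_2d x y Hxy) as [d Hd]. exists d. intros t Ht.
  apply HFG, Hd; [|exact Ht]. rewrite Rminus_eq_0, Rabs_R0. apply cond_pos.
Qed.

Lemma laplacian_ext_on (F G : R -> R -> R) (x y : R) :
  (forall u v, U u v -> F u v = G u v) -> U x y -> laplacian F x y = laplacian G x y.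
Proof.
  intros HFG Hxy. unfold laplacian.
  rewrite (pdx_ext_on (pdx F) (pdx G)), (pdy_ext_on (pdy F) (pdy G)); try easy;
    intros u v Huv; [apply pdy_ext_on | apply pdx_ext_on]; easy.
Qed.

Lemma pdx_pdy_comm (f : R -> R -> R) (x y : R) : smooth_on U f -> U x y ->
  pdx (pdy f) x y = pdy (pdx f) x y.
Proof.
  intros Hf Hxy. apply Schwarz.
  - destruct (open_domain_locally_2d x y Hxy) as [d Hd]. exists d. intros u v Hu Hv.
    specialize (Hd u v Hu Hv).
    repeat split.
    + exact (smooth_on_ex_derive_x f u v Hf Hd).
    + exact (smooth_on_ex_derive_y f u v Hf Hd).
    + exact (smooth_on_ex_derive_x _ u v (smooth_on_pdy f Hf) Hd).
    + exact (smooth_on_ex_derive_y _ u v (smooth_on_pdx f Hf) Hd).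
  - exact (smooth_on_continuity_2d_pt _ x y (smooth_on_pdx _ (smooth_on_pdy f Hf)) Hxy).
  - exact (smooth_on_continuity_2d_pt _ x y (smooth_on_pdy _ (smooth_on_pdx f Hf)) Hxy).
Qed.

Lemma laplacian_abs_dz_sq (f : R -> R -> R) (x y : R) : smooth_on U f -> U x y ->
  laplacian (abs_dz_sq f) x y
  = (pdx (pdx f) x y ^ 2 + 2 * pdx (pdy f) x y ^ 2 + pdy (pdy f) x y ^ 2
     + pdx f x y * pdx (laplacian f) x y + pdy f x y * pdy (laplacian f) x y) / 2.
Proof.
  intros Hf Hxy.
  pose proof (smooth_on_pdx f Hf) as Hfx. pose proof (smooth_on_pdy f Hf) as Hfy.
  assert (Hxx : pdx (pdx (abs_dz_sq f)) x y
    = (pdx (pdx f) x y * pdx (pdx f) x y + pdx f x y * pdx (pdx (pdx f)) x y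
       + pdx (pdy f) x y * pdx (pdy f) x y + pdy f x y * pdx (pdx (pdy f)) x y) / 2).
  { rewrite (pdx_ext_on _ _ x y (fun u v => pdx_abs_dz_sq f u v Hf) Hxy).
    apply Derive_dot_div2; eapply smooth_on_ex_derive_x; eauto using smooth_on_pdx, smooth_on_pdy. }
  assert (Hyy : pdy (pdy (abs_dz_sq f)) x y
    = (pdy (pdx f) x y * pdy (pdx f) x y + pdx f x y * pdy (pdy (pdx f)) x y
       + pdy (pdy f) x y * pdy (pdy f) x y + pdy f x y * pdy (pdy (pdy f)) x y) / 2).
  { rewrite (pdy_ext_on _ _ x y (fun u v => pdy_abs_dz_sq f u v Hf) Hxy).
    apply Derive_dot_div2; eapply smooth_on_ex_derive_y; eauto using smooth_on_pdx, smooth_on_pdy. }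
  assert (Hxyy : pdy (pdy (pdx f)) x y = pdx (pdy (pdy f)) x y).
  { rewrite (pdx_pdy_comm _ x y Hfy Hxy).
    exact (pdy_ext_on _ _ x y (fun u v Huv => eq_sym (pdx_pdy_comm f u v Hf Huv)) Hxy). }
  assert (Hxxy : pdx (pdx (pdy f)) x y = pdy (pdx (pdx f)) x y).
  { rewrite <- (pdx_pdy_comm _ x y Hfx Hxy).
    exact (pdx_ext_on _ _ x y (fun u v => pdx_pdy_comm f u v Hf) Hxy). }
  unfold laplacian at 1. rewrite Hxx, Hyy, Hxyy, Hxxy,
    (pdx_laplacian f x y Hf Hxy), (pdy_laplacian f x y Hf Hxy), (pdx_pdy_comm f x y Hf Hxy).
  field.
Qed.

Lemma laplacian_ln (f : R -> R -> R) (x y : R) :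
  smooth_on U f -> (forall u v, U u v -> 0 < f u v) -> U x y ->
  laplacian (fun a b => ln (f a b)) x y
  = (f x y * laplacian f x y - (pdx f x y ^ 2 + pdy f x y ^ 2)) / f x y ^ 2.
Proof.
  intros Hf Hpos Hxy.
  assert (Hx : forall u v, U u v -> pdx (fun a b => ln (f a b)) u v = pdx f u v / f u v).
  { intros u v Huv. apply (Derive_ln_pos (fun t => f t v)); auto.
    exact (smooth_on_ex_derive_x f u v Hf Huv). }
  assert (Hy : forall u v, U u v -> pdy (fun a b => ln (f a b)) u v = pdy f u v / f u v).
  { intros u v Huv. apply (Derive_ln_pos (fun t => f u t)); auto.
    exact (smooth_on_ex_derive_y f u v Hf Huv). }
  pose proof (Hpos x y Hxy) as Hfxy.
  unfold laplacian. rewrite (pdx_ext_on _ _ x y Hx Hxy), (pdy_ext_on _ _ x y Hy Hxy).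
  unfold pdx at 1, pdy at 1.
  rewrite (Derive_div (fun t => pdx f t y) (fun t => f t y)),
          (Derive_div (fun t => pdy f x t) (fun t => f x t)).
  - unfold pdx, pdy. field. lra.
  - exact (smooth_on_ex_derive_y _ x y (smooth_on_pdy f Hf) Hxy).
  - exact (smooth_on_ex_derive_y f x y Hf Hxy).
  - lra.
  - exact (smooth_on_ex_derive_x _ x y (smooth_on_pdx f Hf) Hxy).
  - exact (smooth_on_ex_derive_x f x y Hf Hxy).
  - lra.
Qed.

End SmoothCalculus.

Lemma gauss_curv_algebra (p q a b d g gx gy lap C : R) :
  C <> 0 -> g <> 0 ->
  C * g = (p ^ 2 + q ^ 2) / 4 -> a + d = 4 * g ->
  C * gx = (p * a + q * b) / 2 -> C * gy = (p * b + q * d) / 2 ->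
  C * lap = (a ^ 2 + 2 * b ^ 2 + d ^ 2 + p * (4 * gx) + q * (4 * gy)) / 2 ->
  - ((g * lap - (gx ^ 2 + gy ^ 2)) / g ^ 2 / 4) / g = - 2 / C.
Proof.
  intros HC Hg Eg Ed Egx Egy Elap.
  assert (Hpq : p ^ 2 + q ^ 2 <> 0) by (intro Z; apply Hg, (Rmult_eq_reg_l C); lra).
  assert (Elap' : lap = (a ^ 2 + 2 * b ^ 2 + d ^ 2 + p * (4 * gx) + q * (4 * gy)) / (2 * C))
    by (apply (Rmult_eq_reg_l C); [rewrite Elap; field|]; auto).
  assert (Egx' : gx = (p * a + q * b) / (2 * C))
    by (apply (Rmult_eq_reg_l C); [rewrite Egx; field|]; auto).
  assert (Egy' : gy = (p * b + q * d) / (2 * C))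
    by (apply (Rmult_eq_reg_l C); [rewrite Egy; field|]; auto).
  assert (Eg' : g = (p ^ 2 + q ^ 2) / (4 * C))
    by (apply (Rmult_eq_reg_l C); [rewrite Eg; field|]; auto).
  assert (Ed' : d = 4 * g - a) by lra.
  clear Eg Ed Egx Egy Elap.
  subst lap gx gy d g. field. auto.
Qed.

Theorem corollary2p2 :
  forall (U : R -> R -> Prop) (g phi : R -> R -> R) (C : R),
    open_domain U ->
    smooth_on U g ->
    (forall x y, U x y -> 0 < g x y) ->
    smooth_on U phi ->
    (forall x y, U x y -> dzdzbar phi x y = g x y) ->
    0 < C ->
    (forall x y, U x y -> abs_dz_sq phi x y / g x y = C) ->
    forall x y, U x y -> gauss_curv g x y = - 2 / C.
Proof.
  intros U g phi C HU Hg Hpos Hphi Hlap HC Hab x y Hxy.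
  assert (Hs : forall u v, U u v -> abs_dz_sq phi u v = C * g u v).
  { intros u v Huv. rewrite <- (Hab u v Huv). field. apply Rgt_not_eq, Hpos, Huv. }
  assert (Hl : forall u v, U u v -> laplacian phi u v = 4 * g u v).
  { intros u v Huv. rewrite <- (Hlap u v Huv). unfold dzdzbar. field. }
  unfold gauss_curv, dzdzbar. rewrite (laplacian_ln U HU g x y Hg Hpos Hxy).
  apply (gauss_curv_algebra (pdx phi x y) (pdy phi x y) (pdx (pdx phi) x y)
    (pdx (pdy phi) x y) (pdy (pdy phi) x y)).
  - lra.
  - apply Rgt_not_eq, Hpos, Hxy.
  - rewrite <- (Hs x y Hxy). reflexivity.
  - rewrite <- (Hl x y Hxy). reflexivity.
  - rewrite <- pdx_scal, <- (pdx_ext_on U HU _ _ x y Hs Hxy).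
    exact (pdx_abs_dz_sq U phi x y Hphi Hxy).
  - rewrite <- pdy_scal, <- (pdy_ext_on U HU _ _ x y Hs Hxy),
      (pdx_pdy_comm U HU phi x y Hphi Hxy).
    exact (pdy_abs_dz_sq U phi x y Hphi Hxy).
  - rewrite <- laplacian_scal, <- (laplacian_ext_on U HU _ _ x y Hs Hxy),
      (laplacian_abs_dz_sq U HU phi x y Hphi Hxy),
      (pdx_ext_on U HU _ _ x y Hl Hxy), (pdy_ext_on U HU _ _ x y Hl Hxy), pdx_scal, pdy_scal.
    reflexivity.
Qed.
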